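(* For every integer $N\ge 1$, the number of tuples $(\mu_1,\dots,\mu_4;d_1,\dots,d_4)\in P^4\times\mathbb Z^4$ with $d_1+d_2+d_3+d_4$ odd and $$6\sum_{i=1}^4|\mu_i|+6\sum_{i=1}^4\binom{d_i}{2}+d_1+d_2+3d_3+3d_4=N$$ equals the number of tuples $(\alpha_1,\dots,\alpha_4;e_1,\dots,e_4)\in P^4\times\mathbb Z^4$ with $e_1+e_2+e_3+e_4$ odd and $$6\sum_{i=1}^4|\alpha_i|+6\sum_{i=1}^4\binom{e_i}{2}+0e_1+0e_2+2e_3+2e_4+1=N.$$
   Context: $P$ denotes the set of all integer partitions into positive parts (including the empty partition); for a partition $\lambda$, $|\lambda|$ is the sum of its parts. For $d\in\mathbb Z$, $\binom{d}{2}=d(d-1)/2$. *)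

From HB Require Import structures.
From mathcomp Require Import all_boot all_order all_algebra.
Set Implicit Arguments. Unset Strict Implicit. Unset Printing Implicit Defensive.
Import Order.TTheory GRing.Theory Num.Theory.

Definition is_partition (s : seq nat) : bool :=
  sorted geq s && all (fun x => 0 < x)%N s.

Definition psize (s : seq nat) : nat := sumn s.

(* binom(d,2) = d(d-1)/2 for d : int (exact division) *)
Definition binom2 (d : int) : int := ((d * (d - 1)) %/ 2)%Z.

Definition has_card (T : eqType) (P : T -> Prop) (n : nat) : Prop :=
  exists s : seq T, [/\ uniq s, size s = n & forall x, x \in s <-> P x].

(* Tuples (mu_1..mu_4 ; d_1..d_4), indices 1..4 represented by 'I_4 = 0..3 *)
Definition tup := ({ffun 'I_4 -> seq nat} * {ffun 'I_4 -> int})%type.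

Local Open Scope ring_scope.

Definition LHS_set (N : nat) (x : tup) : Prop :=
  let mu := x.1 in let d := x.2 in
  [/\ forall i, is_partition (mu i),
      ~~ (2 %| \sum_(i < 4) d i)%Z &
      6 * (\sum_(i < 4) (psize (mu i))%:Z) + 6 * (\sum_(i < 4) binom2 (d i))
        + d 0 + d 1 + 3 * d 2 + 3 * d 3 = N%:Z ].

Definition RHS_set (N : nat) (x : tup) : Prop :=
  let al := x.1 in let e := x.2 in
  [/\ forall i, is_partition (al i),
      ~~ (2 %| \sum_(i < 4) e i)%Z &
      6 * (\sum_(i < 4) (psize (al i))%:Z) + 6 * (\sum_(i < 4) binom2 (e i))
        + 0 * e 0 + 0 * e 1 + 2 * e 2 + 2 * e 3 + 1 = N%:Z ].

From HB Require Import structures.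
From mathcomp Require Import all_boot all_order all_algebra.
From Stdlib Require Import ClassicalEpsilon.
From mathcomp Require Import zify ring.
Import Order.TTheory GRing.Theory Num.Theory.

(* On the integer parts, write the (odd) sum d_1 + ... + d_4 as 2k + 1;
   the affine map
     d |-> (k + 1 - d_2 - d_4, d_2 + d_3 - k, -k, d_3 + d_4 - k)
   sends odd-sum vectors to odd-sum vectors, carries the left-hand weight
   6 sum binom(d_i,2) + d_1 + d_2 + 3 d_3 + 3 d_4 to the right-hand weight
   6 sum binom(e_i,2) + 2 e_3 + 2 e_4 + 1, and has an explicit inverse of the
   same shape.  Hence both solution sets are in bijection.  It remains to see
   that the left-hand set is finite: each weight term 6 binom(x,2) + c x with
   1 <= c <= 5 dominates |x|, which bounds all d_i and all |mu_i| by N. *)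

Lemma has_card_bij {T U : eqType} {P : T -> Prop} {Q : U -> Prop}
    {f : T -> U} {g : U -> T} {n : nat} :
  (forall x, P x -> Q (f x) /\ g (f x) = x) ->
  (forall y, Q y -> P (g y) /\ f (g y) = y) ->
  has_card P n -> has_card Q n.
Proof.
move=> fP gQ [s [s_uniq s_size s_P]]; exists (map f s); split.
- rewrite map_inj_in_uniq // => x y /s_P /fP [_ gfx] /s_P /fP [_ gfy] fxy.
  by rewrite -gfx -gfy fxy.
- by rewrite size_map.
- move=> y; split; first by case/mapP=> x /s_P /fP [Qfx _] ->.
  by move=> /gQ [Pgy fgy]; apply/mapP; exists (g y) => //; apply/s_P.
Qed.

(* A predicate whose elements all occur in a given list has a cardinality
   (classical, since the predicate need not be decidable). *)
Lemma has_card_of_list {T : eqType} {P : T -> Prop} {L : seq T} :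
  (forall x, P x -> x \in L) -> exists n, has_card P n.
Proof.
move=> PL; pose b x : bool := if excluded_middle_informative (P x) then true else false.
exists (size (undup [seq x <- L | b x])); exists (undup [seq x <- L | b x]).
split; [exact: undup_uniq | by [] | move=> x]; rewrite mem_undup mem_filter /b.
by case: excluded_middle_informative => //= Px; split=> // _; exact: PL.
Qed.

Fixpoint bounded_seqs (m k : nat) : seq (seq nat) :=
  if k is k'.+1 then [::] :: [seq a :: s | a <- iota 0 m.+1, s <- bounded_seqs m k']
  else [:: [::]].

Lemma mem_bounded_seqs (m k : nat) (s : seq nat) :
  size s <= k -> all (fun x => x <= m) s -> s \in bounded_seqs m k.
Proof.
elim: k s => [|k IH] [|a s] // size_s /andP [a_le s_le].
rewrite [bounded_seqs _ _.+1]/bounded_seqs -/bounded_seqs in_cons; apply/orP; right.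
by apply: (@allpairs_f _ _ _ (fun a s => a :: s) _ _ a s); [rewrite mem_iota | exact: IH].
Qed.

Lemma positive_seq_bound (s : seq nat) :
  all (fun x => 0 < x) s -> size s <= sumn s /\ all (fun x => x <= sumn s) s.
Proof.
elim: s => [|a s IH] //= /andP [a_gt0 /IH [size_s s_le]]; split; first lia.
rewrite leq_addr /=; apply/allP => x /(allP s_le); lia.
Qed.

Lemma partition_in_bounded_seqs (m : nat) (s : seq nat) :
  is_partition s -> psize s <= m -> s \in bounded_seqs m m.
Proof.
move=> /andP [_ /positive_seq_bound [size_s s_le]] sum_le.
apply: mem_bounded_seqs; first exact: leq_trans sum_le.
by apply/allP => x /(allP s_le) /leq_trans; apply.
Qed.

Definition ffuns_in {I : finType} {T : choiceType} (L : seq T) : seq {ffun I -> T} :=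
  [seq [ffun i => ssval (h i)] | h : {ffun I -> seq_sub L} <- enum {: {ffun I -> seq_sub L}}].

Lemma mem_ffuns_in (I : finType) (T : choiceType) (L : seq T) (f : {ffun I -> T}) :
  (forall i, f i \in L) -> f \in ffuns_in L.
Proof.
move=> f_L; apply/mapP; exists [ffun i => SeqSub (f_L i)]; first by rewrite mem_enum.
by apply/ffunP => i; rewrite !ffunE.
Qed.

Local Open Scope ring_scope.

(* The indices are elaborated in the finite type 'I_4, so that
   they are syntactically the same numerals as in applications of finite
   functions such as d 2, and lia sees both as the same atom. *)
Lemma sum_ord4 (V : nmodType) (f : 'I_4 -> V) :
  \sum_(i < 4) f i =
  f (0 : Finite.sort 'I_4) + f (1 : Finite.sort 'I_4)
  + f (2 : Finite.sort 'I_4) + f (3 : Finite.sort 'I_4).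
Proof.
rewrite !big_ord_recl big_ord0 addr0 !addrA.
by congr (_ + _ + _ + _); congr (f _); apply/val_inj.
Qed.

Definition vec4 {T : Type} (x0 x1 x2 x3 : T) : {ffun 'I_4 -> T} :=
  [ffun i : 'I_4 => nth x0 [:: x0; x1; x2; x3] i].

Lemma vec4_eta (T : Type) (f : {ffun 'I_4 -> T}) : vec4 (f 0) (f 1) (f 2) (f 3) = f.
Proof.
apply/ffunP => -[[|[|[|[|m]]]] lt_i4] //; rewrite ffunE /=; congr (f _); exact: val_inj.
Qed.

Lemma sum_vec4 (V : nmodType) (x0 x1 x2 x3 : V) :
  \sum_(i < 4) vec4 x0 x1 x2 x3 i = x0 + x1 + x2 + x3.
Proof. by rewrite sum_ord4 !ffunE. Qed.

Lemma binom2_mul6 (x : int) : 6 * binom2 x = 3 * x * (x - 1).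
Proof.
have even_prod : (2 %| x * (x - 1))%Z.
  have [x_even|x1_even] : (2 %| x)%Z \/ (2 %| x - 1)%Z by lia.
    exact: dvdz_mulr.
  exact: dvdz_mull.
have := divzK even_prod; rewrite /binom2; lia.
Qed.

Lemma norm_le_weight_term (x c : int) : 1 <= c <= 5 -> `|x| <= 6 * binom2 x + c * x.
Proof.
rewrite binom2_mul6 ler_norml => /andP [c_ge1 c_le5]; apply/andP.
have [x_neg|[x0|x_pos]] : x <= -1 \/ x = 0 \/ 1 <= x by lia.
all: split; nia.
Qed.

Lemma term_le_sum (R : numDomainType) (I : finType) (F : I -> R) (i : I) :
  (forall j, 0 <= F j) -> F i <= \sum_j F j.
Proof. by move=> F_ge0; rewrite (bigD1 i) //= ler_wpDr // sumr_ge0. Qed.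

Definition weight (c d : {ffun 'I_4 -> int}) : int :=
  \sum_(i < 4) (6 * binom2 (d i) + c i * d i).

Definition coefL : {ffun 'I_4 -> int} := vec4 1 1 3 3.
Definition coefR : {ffun 'I_4 -> int} := vec4 0 0 2 2.

Definition odd_sum (d : {ffun 'I_4 -> int}) : bool := ~~ (2 %| \sum_(i < 4) d i)%Z.

Definition size_sum (mu : {ffun 'I_4 -> seq nat}) : int := \sum_(i < 4) (psize (mu i))%:Z.

Lemma weight_coefL (d : {ffun 'I_4 -> int}) :
  weight coefL d = 6 * (\sum_(i < 4) binom2 (d i)) + d 0 + d 1 + 3 * d 2 + 3 * d 3.
Proof.
rewrite /weight big_split -mulr_sumr [\sum_(i < 4) coefL i * _]sum_ord4.
by rewrite /coefL !ffunE /= !mul1r !addrA.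
Qed.

Lemma weight_coefR (e : {ffun 'I_4 -> int}) :
  weight coefR e = 6 * (\sum_(i < 4) binom2 (e i)) + 0 * e 0 + 0 * e 1 + 2 * e 2 + 2 * e 3.
Proof.
rewrite /weight big_split -mulr_sumr [\sum_(i < 4) coefR i * _]sum_ord4.
by rewrite /coefR !ffunE /= !addrA.
Qed.

Lemma LHS_setE (N : nat) (mu : {ffun 'I_4 -> seq nat}) (d : {ffun 'I_4 -> int}) :
  LHS_set N (mu, d) <->
  [/\ forall i, is_partition (mu i), odd_sum d & 6 * size_sum mu + weight coefL d = N%:Z].
Proof. by rewrite weight_coefL !addrA. Qed.

Lemma RHS_setE (N : nat) (al : {ffun 'I_4 -> seq nat}) (e : {ffun 'I_4 -> int}) :
  RHS_set N (al, e) <->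
  [/\ forall i, is_partition (al i), odd_sum e & 6 * size_sum al + weight coefR e + 1 = N%:Z].
Proof. by rewrite weight_coefR !addrA. Qed.

Definition half_odd (s : int) : int := ((s - 1) %/ 2)%Z.

Definition to_rhs (d : {ffun 'I_4 -> int}) : {ffun 'I_4 -> int} :=
  let k := half_odd (\sum_(i < 4) d i) in
  vec4 (k + 1 - d 1 - d 3) (d 1 + d 2 - k) (- k) (d 2 + d 3 - k).

Definition to_lhs (e : {ffun 'I_4 -> int}) : {ffun 'I_4 -> int} :=
  let k := half_odd (\sum_(i < 4) e i) in
  vec4 (k + 1 - e 1 - e 2 - e 3) (e 1 - k) (k - e 2) (e 3 - k).

(* Both maps produce vectors of odd sum: 1 + 2 (d_3 - k) and 1 - 2 e_3. *)
Lemma odd_sum_to_rhs (d : {ffun 'I_4 -> int}) : odd_sum (to_rhs d).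
Proof. rewrite /odd_sum /to_rhs sum_vec4; lia. Qed.

Lemma odd_sum_to_lhs (e : {ffun 'I_4 -> int}) : odd_sum (to_lhs e).
Proof. rewrite /odd_sum /to_lhs sum_vec4; lia. Qed.

Lemma odd_sumE (d : {ffun 'I_4 -> int}) :
  odd_sum d -> \sum_(i < 4) d i = 2 * half_odd (\sum_(i < 4) d i) + 1.
Proof. rewrite /odd_sum /half_odd; lia. Qed.

Lemma to_rhsK (d : {ffun 'I_4 -> int}) : odd_sum d -> to_lhs (to_rhs d) = d.
Proof.
move=> /odd_sumE; rewrite /to_lhs /to_rhs.
set k := half_odd (\sum_(i < 4) d i); clearbody k => sum_d.
rewrite sum_vec4 !ffunE /= /half_odd -[RHS]vec4_eta.
by congr vec4; move: sum_d; rewrite sum_ord4; lia.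
Qed.

Lemma to_lhsK (e : {ffun 'I_4 -> int}) : odd_sum e -> to_rhs (to_lhs e) = e.
Proof.
move=> /odd_sumE; rewrite /to_lhs /to_rhs.
set k := half_odd (\sum_(i < 4) e i); clearbody k => sum_e.
rewrite sum_vec4 !ffunE /= /half_odd -[RHS]vec4_eta.
by congr vec4; move: sum_e; rewrite sum_ord4; lia.
Qed.

(* The key identity: the bijection carries the left-hand weight to the
   right-hand weight.  Writing d_1 = 2k + 1 - d_2 - d_3 - d_4, both sides are
   the same quadratic polynomial in k, d_2, d_3, d_4. *)
Lemma weight_to_rhs (d : {ffun 'I_4 -> int}) :
  odd_sum d -> weight coefR (to_rhs d) + 1 = weight coefL d.
Proof.
move=> /odd_sumE; rewrite weight_coefL weight_coefR /to_rhs.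
set k := half_odd (\sum_(i < 4) d i); clearbody k.
rewrite !sum_ord4 !ffunE /= !mulrDr !binom2_mul6 => sum_d.
have -> : d 0 = 2 * k + 1 - d 1 - d 2 - d 3 by lia.
ring.
Qed.

Lemma weight_to_lhs (e : {ffun 'I_4 -> int}) :
  odd_sum e -> weight coefL (to_lhs e) = weight coefR e + 1.
Proof. by move=> odd_e; rewrite -weight_to_rhs ?odd_sum_to_lhs // to_lhsK. Qed.

Definition tup_to_rhs (x : tup) : tup := (x.1, to_rhs x.2).
Definition tup_to_lhs (x : tup) : tup := (x.1, to_lhs x.2).

Lemma tup_to_rhsP (N : nat) (x : tup) :
  LHS_set N x -> RHS_set N (tup_to_rhs x) /\ tup_to_lhs (tup_to_rhs x) = x.
Proof.
case: x => mu d /LHS_setE [parts odd_d weight_eq].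
split; last by rewrite /tup_to_lhs /= to_rhsK.
by apply/RHS_setE; split=> //; [exact: odd_sum_to_rhs | rewrite -addrA weight_to_rhs].
Qed.

Lemma tup_to_lhsP (N : nat) (x : tup) :
  RHS_set N x -> LHS_set N (tup_to_lhs x) /\ tup_to_rhs (tup_to_lhs x) = x.
Proof.
case: x => al e /RHS_setE [parts odd_e weight_eq].
split; last by rewrite /tup_to_rhs /= to_lhsK.
by apply/LHS_setE; split=> //; [exact: odd_sum_to_lhs | rewrite weight_to_lhs // addrA].
Qed.

Lemma norm_le_weight (c d : {ffun 'I_4 -> int}) (i : 'I_4) :
  (forall j, 1 <= c j <= 5) -> `|d i| <= weight c d.
Proof.
move=> c_range; have term_ge_norm j := norm_le_weight_term (d j) (c j) (c_range j).
apply: le_trans (term_ge_norm i) _; rewrite /weight.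
apply: (@term_le_sum _ _ (fun j => 6 * binom2 (d j) + c j * d j) i) => j.
exact: le_trans (normr_ge0 _) (term_ge_norm j).
Qed.

Lemma LHS_set_bounded (N : nat) (mu : {ffun 'I_4 -> seq nat}) (d : {ffun 'I_4 -> int}) :
  LHS_set N (mu, d) -> forall i, (psize (mu i) <= N)%N /\ `|d i| <= N%:Z.
Proof.
move=> /LHS_setE [_ _ weight_eq] i.
have coefL_range j : 1 <= coefL j <= 5 by rewrite /coefL ffunE; case: j => -[|[|[|[|]]]].
have d_le := norm_le_weight coefL d i coefL_range.
have d0_le := norm_le_weight coefL d 0 coefL_range.
have mu_le : (psize (mu i))%:Z <= size_sum mu by apply: term_le_sum.
have size_ge0 : 0 <= size_sum mu by apply: sumr_ge0.
have d0_ge0 := normr_ge0 (d 0).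
split; [rewrite -lez_nat|]; lia.
Qed.

Definition int_range (m : nat) : seq int := [seq k%:Z - m%:Z | k <- iota 0 (m + m).+1].

Lemma mem_int_range (m : nat) (x : int) : `|x| <= m%:Z -> x \in int_range m.
Proof.
rewrite ler_norml => /andP [x_ge x_le]; apply/mapP.
by exists (absz (x + m%:Z)); [rewrite mem_iota /= |]; lia.
Qed.

Definition LHS_candidates (N : nat) : seq tup :=
  [seq (mu, d) | mu <- ffuns_in (bounded_seqs N N), d <- ffuns_in (int_range N)].

Lemma LHS_in_candidates (N : nat) (x : tup) : LHS_set N x -> x \in LHS_candidates N.
Proof.
case: x => mu d sol; have bounds := LHS_set_bounded N mu d sol.
have [parts _ _] := sol.
apply: (@allpairs_f _ _ _ (fun mu d => (mu, d)) _ _ mu d); apply: mem_ffuns_in => i.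
  exact: partition_in_bounded_seqs (parts i) (bounds i).1.
exact: mem_int_range (bounds i).2.
Qed.

Theorem lemma3p5 (N : nat) (hN : (1 <= N)%N) :
  exists n : nat, has_card (LHS_set N) n /\ has_card (RHS_set N) n.
Proof.
have [n LHS_card] := has_card_of_list (LHS_in_candidates N).
exists n; split=> //.
exact: (has_card_bij (tup_to_rhsP N) (tup_to_lhsP N) LHS_card).
Qed.
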